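(* Let $X$ be a random variable on a finite alphabet $\mathcal{X}$ with pmf $P_X$, let $\mathcal{S}$ be a finite set, and let $\delta,\eta,\nu_1>0$ be such that for all sufficiently large $N$ and every $s^N\in\mathcal{S}^N$, $\Pr\{X^N\in\tilde T^N[X,s^N]_{\delta,\eta}\}>1-2^{-N\nu_1}$, where $X^N=(X_1,\dots,X_N)$ is i.i.d. with pmf $P_X$. Let $R'>\nu_1$ and $L'=2^{NR'}$, and let $\mathbf{C}=(X^N(1),\dots,X^N(L'))$ be a random codebook whose $L'N$ letters are i.i.d. with pmf $P_X$. Then $\Pr\{\mathbf{C}\text{ is good with respect to }X\}>1-\epsilon_1$, where $\epsilon_1\to0$ as $N\to\infty$.
   Context: For $s^N\in\mathcal{S}^N$ and $a\in\mathcal{S}$, $\mathcal{I}(a:s^N)=\{1\le i\le N: s_i=a\}$, $\mu_a=|\mathcal{I}(a:s^N)|$, and $\mathcal{S}(s^N,\eta)=\{a\in\mathcal{S}:\mu_a>N\eta/|\mathcal{S}|\}$. For a pmf $P$ on a finite set $\mathcal{A}$, the $\delta$-letter typical set $T^n_\delta(P)$ is the set of $a^n\in\mathcal{A}^n$ with $|\frac1nN(b:a^n)-P(b)|\le\delta P(b)$ for all $b\in\mathcal{A}$, where $N(b:a^n)$ is the number of positions of $a^n$ equal to $b$. The set $\tilde T^N[X,s^N]_{\delta,\eta}$ consists of all $x^N\in\mathcal{X}^N$ with $P_X(x_i)>0$ for all $i$ and $x_{\mathcal{I}(a:s^N)}=(x_i)_{i\in\mathcal{I}(a:s^N)}\in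 T^{\mu_a}_\delta(P_X)$ for all $a\in\mathcal{S}(s^N,\eta)$. A codebook $\mathcal{C}=(x^N(l))_{l=1}^{L'}$ (an indexed list, repetitions allowed) is called good with respect to $X$ (with parameters $\delta,\eta,\nu_1$) if for every $s^N\in\mathcal{S}^N$ the number of indices $l$ with $x^N(l)\in\tilde T^N[X,s^N]_{\delta,\eta}$ exceeds $(1-2\cdot2^{-N\nu_1})L'$. *)

From mathcomp Require Import all_boot all_order all_algebra.
From mathcomp Require Import all_classical all_reals all_analysis.
Set Implicit Arguments. Unset Strict Implicit. Unset Printing Implicit Defensive.
Import Order.TTheory GRing.Theory Num.Theory.
Local Open Scope ring_scope.

Section Defs.
Variables (R : realType) (X S : finType).

Definition is_pmf (P : X -> R) : Prop := (forall x, 0 <= P x) /\ \sum_(x : X) P x = 1.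

Definition idx_of (N : nat) (a : S) (s : {ffun 'I_N -> S}) : seq 'I_N :=
  [seq i <- enum 'I_N | s i == a].

Definition mu (N : nat) (a : S) (s : {ffun 'I_N -> S}) : nat := size (idx_of a s).

Definition bigS (N : nat) (s : {ffun 'I_N -> S}) (eta : R) : {set S} :=
  [set a | (N%:R * eta / #|S|%:R) < (mu a s)%:R].

Definition letter_typical (P : X -> R) (delta : R) (xs : seq X) : bool :=
  [forall b : X, `| (count_mem b xs)%:R / (size xs)%:R - P b | <= delta * P b].

Definition tildeT (P : X -> R) (delta eta : R) (N : nat)
    (s : {ffun 'I_N -> S}) (x : {ffun 'I_N -> X}) : bool :=
  [forall i : 'I_N, 0 < P (x i)] &&
  [forall a in bigS s eta, letter_typical P delta [seq x i | i <- idx_of a s]].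

Definition PrN (P : X -> R) (N : nat) (A : pred {ffun 'I_N -> X}) : R :=
  \sum_(x : {ffun 'I_N -> X} | A x) \prod_(i < N) P (x i).

Definition good (P : X -> R) (delta eta nu1 : R) (N L' : nat)
    (C : {ffun 'I_L' -> {ffun 'I_N -> X}}) : bool :=
  [forall s : {ffun 'I_N -> S},
     (1 - 2 * (2 `^ (- (N%:R * nu1)))) * L'%:R
       < #|[set l : 'I_L' | tildeT P delta eta s (C l)]|%:R].

Definition PrCode (P : X -> R) (N L' : nat)
    (A : pred {ffun 'I_L' -> {ffun 'I_N -> X}}) : R :=
  \sum_(C : {ffun 'I_L' -> {ffun 'I_N -> X}} | A C) \prod_(l < L') \prod_(i < N) P (C l i).

Definition Lprime (Rp : R) (N : nat) : nat := Num.truncn (2 `^ (N%:R * Rp)).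

End Defs.

From mathcomp Require Import all_boot all_order all_algebra.
From mathcomp Require Import all_classical all_reals all_analysis.
From mathcomp Require Import ring lra.
Set Implicit Arguments. Unset Strict Implicit. Unset Printing Implicit Defensive.
Import Order.TTheory GRing.Theory Num.Theory.
Local Open Scope ring_scope.

(* Fix a state sequence s^N.  The codewords are i.i.d., so the number of codewords
   outside tildeT[X, s^N] is binomial with success probability below
   q = 2^(-N nu1).  Markov's inequality for 2^(that number), whose expectation is
   at most (1 + q)^L' <= e^(q L'), bounds the probability that it reaches 2 q L' by
   e^(-(2 ln 2 - 1) q L').  Since q L' >= 2^(N (R' - nu1)) - 1 grows doubly
   exponentially in N, this beats the union bound over the |S|^N sequences s^N. *)

Section ProductWeights.
Variable R : realType.

Lemma sum_ffun_prod (I T : finType) (F : T -> R) :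
  \sum_(f : {ffun I -> T}) \prod_(i : I) F (f i) = (\sum_(t : T) F t) ^+ #|I|.
Proof. by rewrite -(bigA_distr_bigA (fun _ t => F t)) prodr_const. Qed.

Lemma sum_ffun_prod_exprn_card (I T : finType) (w : T -> R) (B : pred T) (r : R) :
  \sum_(f : {ffun I -> T}) (\prod_(i : I) w (f i)) * r ^+ #|[set i | B (f i)]|
  = (\sum_(t : T) w t * (if B t then r else 1)) ^+ #|I|.
Proof.
rewrite -sum_ffun_prod; apply: eq_bigr => f _.
rewrite -prodr_const [X in _ * X]big_mkcond -big_split /=.
by apply: eq_bigr => i _; rewrite inE.
Qed.

Lemma sum_ffun_prod_eq1 (I T : finType) (F : T -> R) :
  \sum_(t : T) F t = 1 -> \sum_(f : {ffun I -> T}) \prod_(i : I) F (f i) = 1.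
Proof. by move=> F_sum1; rewrite sum_ffun_prod F_sum1 expr1n. Qed.

Lemma ler_sum_exists (I T : finType) (w : T -> R) (D : pred T) (A : I -> pred T) :
  (forall x, 0 <= w x) -> (forall x, D x -> exists i, A i x) ->
  \sum_(x | D x) w x <= \sum_(i : I) \sum_(x | A i x) w x.
Proof.
move=> w_ge0 DA; rewrite [leRHS](exchange_big_dep predT) //= big_mkcond /=.
apply: ler_sum => x _; case: ifP => [/DA [i Aix] | _]; last exact: sumr_ge0.
by rewrite (bigD1 i) //= lerDl sumr_ge0.
Qed.

Lemma chernoff_card (I T : finType) (w : T -> R) (B : pred T) (p t k : R) :
  (forall x, 0 <= w x) -> \sum_(x : T) w x = 1 ->
  \sum_(x | B x) w x <= p -> 0 <= t ->
  \sum_(f : {ffun I -> T} | k <= #|[set i | B (f i)]|%:R) \prod_(i : I) w (f i)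
    <= expR ((expR t - 1) * p * #|I|%:R - t * k).
Proof.
move=> w_ge0 w_sum1 Bp t_ge0.
have e_ge1 : 1 <= expR t by have := expR_ge1Dx t; lra.
set e := expR t.
have markov : \sum_(f : {ffun I -> T} | k <= #|[set i | B (f i)]|%:R)
      \prod_(i : I) w (f i)
    <= \sum_(f : {ffun I -> T})
      (\prod_(i : I) w (f i)) * e ^+ #|[set i | B (f i)]| * expR (- (t * k)).
  rewrite big_mkcond /=; apply: ler_sum => f _.
  have w_f : 0 <= \prod_(i : I) w (f i) by apply: prodr_ge0.
  case: ifP => [kc|_]; last by rewrite !mulr_ge0 ?exprn_ge0 ?expR_ge0 // (le_trans ler01).
  rewrite -mulrA ler_peMr // -expRM_natl -expRD -[X in X <= _]expR0 ler_expR.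
  have := ler_wpM2l t_ge0 kc; lra.
have mgf : \sum_(x : T) w x * (if B x then e else 1)
    = 1 + (e - 1) * \sum_(x | B x) w x.
  rewrite -[X in _ = X + _]w_sum1 mulr_sumr [X in _ + X]big_mkcond -big_split /=.
  by apply: eq_bigr => x _; case: (B x); ring.
have B_ge0 : 0 <= \sum_(x | B x) w x by apply: sumr_ge0.
apply: (le_trans markov); rewrite -mulr_suml sum_ffun_prod_exprn_card mgf.
rewrite [X in _ <= X]expRD ler_wpM2r ?expR_ge0 //.
rewrite [_ * #|I|%:R]mulrC expRM_natl.
apply: lerXn2r; rewrite ?nnegrE ?expR_ge0 //; first by rewrite addr_ge0 ?mulr_ge0 ?subr_ge0.
apply: (le_trans _ (expR_ge1Dx _)); rewrite lerD2l ler_wpM2l ?subr_ge0 //.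
Qed.

End ProductWeights.

Section Asymptotics.
Variable R : realType.

Lemma ln2_gt_half : 1 / 2 < ln (2 : R).
Proof.
have e_half : expR (1 / 2 : R) < 2.
  have half_neq0 : - (1 / 2) != 0 :> R by rewrite oppr_eq0.
  have := expR_gt1Dx half_neq0; have := expRxMexpNx_1 (1 / 2 : R).
  have := expR_gt0 (1 / 2 : R); nra.
by rewrite -ltr_expR lnK ?posrE.
Qed.

Lemma powR2E (x : R) : 2 `^ x = expR (x * ln 2).
Proof. by rewrite /powR pnatr_eq0. Qed.

Lemma sqr_half_le_expR_sub1 (y : R) : 0 <= y -> y ^+ 2 / 2 <= expR y - 1.
Proof. by move=> y_ge0; have := expR_ge1Dxn 1 y_ge0; rewrite [(2`!)%:R]/=; lra. Qed.

Lemma exprn_le_expR_mul (K : R) (n : nat) : 0 <= K -> K ^+ n <= expR (n%:R * K).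
Proof.
move=> K_ge0; rewrite expRM_natl; apply: lerXn2r; rewrite ?nnegrE ?expR_ge0 //.
by have := expR_ge1Dx K; lra.
Qed.

Lemma linear_sub_quadratic_eventually_lt (a b t : R) : 0 < a ->
  exists N1 : nat, forall N : nat, (N1 <= N)%N -> b * N%:R - a * N%:R ^+ 2 < t.
Proof.
move=> a_gt0; exists (Num.truncn ((`|b| + `|t|) / a)).+1 => N N1_le.
have N_ge1 : 1 <= N%:R :> R by rewrite ler1n (leq_trans _ N1_le).
have aN_gt : `|b| + `|t| < a * N%:R.
  rewrite -ltr_pdivrMl // mulrC; apply: (lt_le_trans (truncnS_gt _)).
  by rewrite ler_nat.
have N_gt0 : 0 < N%:R :> R by apply: lt_le_trans N_ge1.
move: aN_gt; rewrite -(ltr_pM2r N_gt0); have := ler_wpM2r (ltW N_gt0) (ler_norm b).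
have := ler_wpM2l (normr_ge0 t) N_ge1; have := ler_norm (- t); rewrite normrN expr2.
lra.
Qed.

Lemma doubly_exponential_eventually_lt (K c d eps : R) :
  0 <= K -> 0 < c -> 0 < d -> 0 < eps ->
  exists N1 : nat, forall N : nat, (N1 <= N)%N -> forall m : R,
    expR (N%:R * d) - 1 <= m -> K ^+ N * expR (- (c * m)) < eps.
Proof.
move=> K_ge0 c_gt0 d_gt0 eps_gt0; set a := c * d ^+ 2 / 2.
have a_gt0 : 0 < a by rewrite /a !mulr_gt0 ?exprn_gt0.
have [N1 N1P] := linear_sub_quadratic_eventually_lt K (ln eps) a_gt0.
exists N1 => N N1_le m m_ge.
have m_ge_sqr : a * N%:R ^+ 2 <= c * m.
  have -> : a * N%:R ^+ 2 = c * ((N%:R * d) ^+ 2 / 2) by rewrite /a; field.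
  rewrite ler_wpM2l ?(ltW c_gt0) // (le_trans _ m_ge) // sqr_half_le_expR_sub1 //.
  by rewrite mulr_ge0 // ltW.
have expR_lt : expR (K * N%:R - a * N%:R ^+ 2) < eps.
  by rewrite -[ltRHS]lnK ?posrE // ltr_expR N1P.
apply: le_lt_trans expR_lt.
rewrite expRD [K * _]mulrC ler_pM ?exprn_ge0 ?expR_ge0 ?exprn_le_expR_mul //.
by rewrite ler_expR lerN2.
Qed.

End Asymptotics.

Lemma powR2_mul_Lprime_ge (R : realType) (Rp nu1 : R) (N : nat) : 0 <= nu1 ->
  expR (N%:R * ((Rp - nu1) * ln 2)) - 1 <= 2 `^ (- (N%:R * nu1)) * (Lprime Rp N)%:R.
Proof.
move=> nu1_ge0; set q := 2 `^ _.
have q_ge0 : 0 <= q by rewrite powR_ge0.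
have q_le1 : q <= 1.
  by rewrite /q powR2E expR_le1 mulNr oppr_le0 !mulr_ge0 // ln_ge0 // ler1n.
have L_gt : 2 `^ (N%:R * Rp) - 1 < (Lprime Rp N)%:R.
  by have := truncnS_gt (2 `^ (N%:R * Rp)); rewrite -addn1 natrD; lra.
have -> : expR (N%:R * ((Rp - nu1) * ln 2)) = q * 2 `^ (N%:R * Rp).
  by rewrite /q !powR2E -expRD; congr expR; ring.
have := ler_wpM2l q_ge0 (ltW L_gt); nra.
Qed.

Section Codebook.
Variables (R : realType) (X S : finType) (P : X -> R).
Hypothesis P_pmf : is_pmf P.

Lemma PrCodeC (N L : nat) (A : pred {ffun 'I_L -> {ffun 'I_N -> X}}) :
  PrCode P A = 1 - PrCode P [pred C | ~~ A C].
Proof.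
have code_sum1 :
    \sum_(C : {ffun 'I_L -> {ffun 'I_N -> X}}) \prod_(l < L) \prod_(i < N) P (C l i) = 1.
  apply: (@sum_ffun_prod_eq1 _ _ _ (fun x : {ffun 'I_N -> X} => \prod_(i < N) P (x i))).
  exact: sum_ffun_prod_eq1 P_pmf.2.
by rewrite /PrCode -[X in X - _]code_sum1 [X in _ = X - _](bigID A) /= addrK.
Qed.

Lemma PrCode_many_atypical_le (N L : nat) (T : pred {ffun 'I_N -> X}) (q : R) :
  1 - q < PrN P T ->
  \sum_(C : {ffun 'I_L -> {ffun 'I_N -> X}} | 2 * (q * L%:R) <= #|[set l | ~~ T (C l)]|%:R)
      \prod_(l < L) \prod_(i < N) P (C l i)
    <= expR (- ((2 * ln 2 - 1) * (q * L%:R))).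
Proof.
move=> T_typical.
have w_ge0 (x : {ffun 'I_N -> X}) : 0 <= \prod_(i < N) P (x i).
  by apply: prodr_ge0 => i _; exact: P_pmf.1.
have w_sum1 : \sum_(x : {ffun 'I_N -> X}) \prod_(i < N) P (x i) = 1.
  exact: sum_ffun_prod_eq1 P_pmf.2.
have atypical_le : \sum_(x | ~~ T x) \prod_(i < N) P (x i) <= q.
  move: T_typical; rewrite /PrN -[X in X - q]w_sum1 [X in X - q](bigID T) /=; lra.
have ln2_ge0 : 0 <= ln (2 : R) by rewrite ln_ge0 // ler1n.
apply: le_trans (chernoff_card 'I_L (2 * (q * L%:R)) w_ge0 w_sum1 atypical_le ln2_ge0) _.
rewrite lnK ?posrE // card_ord ler_expR; lra.
Qed.

Lemma not_good_many_atypical (delta eta nu1 : R) (N L : nat)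
    (C : {ffun 'I_L -> {ffun 'I_N -> X}}) :
  ~~ good S P delta eta nu1 C ->
  exists s : {ffun 'I_N -> S},
    2 * (2 `^ (- (N%:R * nu1)) * L%:R)
      <= #|[set l | ~~ tildeT P delta eta s (C l)]|%:R.
Proof.
rewrite /good negb_forall => /existsP [s]; rewrite -leNgt => few_typical; exists s.
have -> : [set l | ~~ tildeT P delta eta s (C l)] = ~: [set l | tildeT P delta eta s (C l)].
  by apply/setP => l; rewrite !inE.
have := cardsC [set l | tildeT P delta eta s (C l)].
by rewrite card_ord => /(congr1 (GRing.natmul (1 : R))); rewrite natrD; lra.
Qed.

Lemma PrCode_not_good_le (delta eta nu1 : R) (N L : nat) :
  (forall s : {ffun 'I_N -> S},
     1 - 2 `^ (- (N%:R * nu1)) < PrN P (tildeT P delta eta s)) ->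
  PrCode P [pred C : {ffun 'I_L -> {ffun 'I_N -> X}} | ~~ good S P delta eta nu1 C]
    <= #|S|%:R ^+ N * expR (- ((2 * ln 2 - 1) * (2 `^ (- (N%:R * nu1)) * L%:R))).
Proof.
move=> typical; rewrite /PrCode.
apply: le_trans (ler_sum_exists _ (@not_good_many_atypical _ _ _ _ _)) _ => /=.
  by move=> C; apply: prodr_ge0 => l _; apply: prodr_ge0 => i _; exact: P_pmf.1.
apply: le_trans (ler_sum _ (fun s _ => PrCode_many_atypical_le L (typical s))) _.
by rewrite sumr_const card_ffun card_ord -(mulr_natl (expR _) (#|S| ^ N)) natrX.
Qed.

End Codebook.

Theorem lemma1 (R : realType) (X S : finType) (P : X -> R)
    (delta eta nu1 Rp : R) :
  is_pmf P ->
  0 < delta -> 0 < eta -> 0 < nu1 ->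
  (exists N0 : nat, forall N : nat, (N0 <= N)%N ->
     forall s : {ffun 'I_N -> S},
       1 - 2 `^ (- (N%:R * nu1)) < PrN P (tildeT P delta eta s)) ->
  nu1 < Rp ->
  forall eps : R, 0 < eps ->
  exists N1 : nat, forall N : nat, (N1 <= N)%N ->
    1 - eps < PrCode P (@good R X S P delta eta nu1 N (Lprime Rp N)).
Proof.
move=> P_pmf _ _ nu1_gt0 [N0 typical] nu1_lt_Rp eps eps_gt0.
have c_gt0 : 0 < 2 * ln (2 : R) - 1 by have := ln2_gt_half R; lra.
have d_gt0 : 0 < (Rp - nu1) * ln (2 : R) by rewrite mulr_gt0 ?ln_gt0 ?ltr1n ?subr_gt0.
have [N1 decay] := doubly_exponential_eventually_lt (ler0n R #|S|) c_gt0 d_gt0 eps_gt0.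
exists (maxn N0 N1) => N; rewrite geq_max => /andP [N0_le N1_le].
rewrite (PrCodeC P_pmf) ltrD2l ltrN2.
apply: le_lt_trans (PrCode_not_good_le P_pmf _ (typical N N0_le)) _.
by apply: decay => //; apply: powR2_mul_Lprime_ge; rewrite ltW.
Qed.
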